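(* In the setting of the context, on the event $\mathcal E_0=\{\theta^*\in\mathcal B_k\cap\mathcal C_k\text{ for all }k\ge1\}$, for every episode $k$, all states $s$, actions $a$ and stages $h=1,\dots,H+1$, \[ Q^{\pi^*}_h(s,a)\le\widehat Q_{k,h}(s,a),\qquad V^{\pi^*}_h(s)\le\widehat V_{k,h}(s). \]
   Context: Online MDP $(\mathcal S,\mathcal A,P,r,H,s_1)$ with known reward $r:\mathcal S\times\mathcal A\to[0,1]$ and $P(s'\mid s,a)=\langle\theta^*,\phi(s'\mid s,a)\rangle$ for a known feature map $\phi:\mathcal S\times\mathcal A\times\mathcal S\to\mathbb R^d$; $\phi_j(\cdot\mid s,a)\in\mathbb R^{|\mathcal S|}$ denotes $(\phi_j(s'\mid s,a))_{s'}$. $\pi^*$ is an optimal policy, $Q^{\pi^*}_h(s,a)=\mathbb E_{\pi^*}[\sum_{i=h}^Hr(s_i,a_i)\mid s_h=s,a_h=a]$, $V^{\pi^*}_h(s)=\max_aQ^{\pi^*}_h(s,a)$, $Q^{\pi^*}_{H+1}\equiv0$. In episode $k$ the algorithm O-O UCRL-VTR has two sets $\mathcal B_k,\mathcal C_k\subset\mathbb R^d$ (ellipsoidal confidence sets around an offline–online and an online-only ridge estimator) and computes $\widehat Q_{k,H+1}\equiv0$ and, for $h=H,\dots,1$, $\widehat Q_{k,h}(s,a)=r(s,a)+\max_{\theta\in\mathcal B_k\cap\mathcal C_k}\sum_{j=1}^d\theta_j\phi_j(\cdot\mid s,a)^\top\widehat V_{k,h+1}$, $\widehat V_{k,h}(s)=\max_a\widehat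 Q_{k,h}(s,a)$ (with $\widehat V_{k,H+1}=0$). *)

From mathcomp Require Import all_boot all_order all_algebra.
Set Implicit Arguments. Unset Strict Implicit. Unset Printing Implicit Defensive.
Import Order.TTheory GRing.Theory Num.Theory.
Local Open Scope ring_scope.

Section MDP.
Variables (R : realFieldType) (S A : finType) (d H : nat).

Definition Plin (theta : 'I_d -> R) (phi : S -> A -> S -> 'I_d -> R)
  (s : S) (a : A) (s' : S) : R := \sum_(j < d) theta j * phi s a s' j.

(* deterministic (possibly non-stationary) Markov policy: stage -> state -> action *)
Definition policy := nat -> S -> A.

(* Q^pi with n stages remaining (n = H+1-h); Q_{H+1} = 0 and
   Q^pi_h(s,a) = r(s,a) + sum_{s'} P(s'|s,a) Q^pi_{h+1}(s', pi_{h+1}(s')) *)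
Fixpoint Qrem (P : S -> A -> S -> R) (r : S -> A -> R) (pi : policy) (n : nat)
  : S -> A -> R :=
  match n with
  | 0 => fun _ _ => 0
  | n'.+1 => fun s a =>
      r s a + \sum_(s' : S) P s a s' * Qrem P r pi n' s' (pi (H.+1 - n')%N s')
  end.

Definition Qpi P r pi (h : nat) (s : S) (a : A) : R := Qrem P r pi (H.+1 - h)%N s a.
Definition Vpi P r pi (h : nat) (s : S) : R := Qpi P r pi h s (pi h s).

Definition optimal_policy P r (pistar : policy) : Prop :=
  forall (pi : policy) (h : nat) (s : S), (1 <= h <= H.+1)%N ->
    Vpi P r pi h s <= Vpi P r pistar h s.

End MDP.

Definition is_max (R : realFieldType) (X : R -> Prop) (m : R) : Prop :=
  X m /\ forall x, X x -> x <= m.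

From mathcomp Require Import all_boot all_order all_algebra.
From mathcomp Require Import zify.
Import Order.TTheory GRing.Theory Num.Theory.
Local Open Scope ring_scope.

(* If
   V^pi_{h+1} <= Vhat_{h+1}, then, the transition probabilities being
   nonnegative, Q^pi_h(s,a) = r(s,a) + sum_j theta^*_j phi_j(.|s,a)^T V^pi_{h+1}
   is at most the same expression with Vhat_{h+1}, which is one of the values
   maximised over the confidence set (it contains theta^* ), hence at most
   Qhat_h(s,a).  Finally V^pi_h(s) = Q^pi_h(s, pi_h(s)) <= max_a Qhat_h(s,a). *)

Lemma nat_down_ind (P : nat -> Prop) (m n : nat) :
  P n -> (forall h, (m <= h < n)%N -> P h.+1 -> P h) ->
  forall h, (m <= h <= n)%N -> P h.
Proof.
move=> Pn IH h /andP[mh hn]; have [i ni] : exists i, (n - h = i)%N by eexists.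
elim: i h mh hn ni => [|i IHi] h mh hn ni.
- by have -> : h = n by lia.
- by apply: IH; [lia | apply: IHi; lia].
Qed.

Section Optimism.
Variables (R : realFieldType) (S A : finType) (d H : nat).
Implicit Types (P : S -> A -> S -> R) (r : S -> A -> R) (pi : policy S A).

Lemma Qpi_last P r pi s a : Qpi H P r pi H.+1 s a = 0.
Proof. by rewrite /Qpi subnn. Qed.

Lemma QpiE P r pi h s a : (1 <= h <= H)%N ->
  Qpi H P r pi h s a = r s a + \sum_(s' : S) P s a s' * Vpi H P r pi h.+1 s'.
Proof.
move=> /andP[h_gt0 h_leH]; rewrite /Vpi /Qpi.
have -> /= : (H.+1 - h = (H - h).+1)%N by lia.
have -> : (H.+1 - (H - h) = h.+1)%N by lia.
by rewrite subSS.
Qed.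

Lemma sum_Plin_mul (theta : 'I_d -> R) (phi : S -> A -> S -> 'I_d -> R)
    (f : S -> R) s a :
  \sum_(s' : S) Plin theta phi s a s' * f s' =
  \sum_(j < d) theta j * \sum_(s' : S) phi s a s' j * f s'.
Proof.
under eq_bigr do rewrite /Plin big_distrl.
rewrite exchange_big /=; apply: eq_bigr => j _.
by rewrite big_distrr /=; apply: eq_bigr => s' _; rewrite mulrA.
Qed.

Variables (phi : S -> A -> S -> 'I_d -> R) (thetastar : 'I_d -> R).
Variables (r : S -> A -> R) (pi : policy S A).
Variables (Theta : ('I_d -> R) -> Prop) (Qhat : nat -> S -> A -> R).
Variable (Vhat : nat -> S -> R).

Let Pstar := Plin thetastar phi.

Hypothesis P_nonneg : forall s a s', 0 <= Pstar s a s'.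
Hypothesis thetastar_in : Theta thetastar.
Hypothesis Qhat_last : forall s a, Qhat H.+1 s a = 0.
Hypothesis Vhat_last : forall s, Vhat H.+1 s = 0.
Hypothesis Qhat_def : forall h s a, (1 <= h <= H)%N ->
  exists m, is_max (fun x => exists2 theta, Theta theta &
                       x = \sum_(j < d) theta j *
                             \sum_(s' : S) phi s a s' j * Vhat h.+1 s') m
            /\ Qhat h s a = r s a + m.
Hypothesis Vhat_def : forall h s, (1 <= h <= H)%N ->
  is_max (fun x => exists a, x = Qhat h s a) (Vhat h s).

Lemma Qpi_le_Qhat h : (1 <= h <= H)%N ->
  (forall s, Vpi H Pstar r pi h.+1 s <= Vhat h.+1 s) ->
  forall s a, Qpi H Pstar r pi h s a <= Qhat h s a.
Proof.
move=> hH V_le s a; rewrite QpiE //.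
have [m [[_ m_max] ->]] := Qhat_def h s a hH.
rewrite lerD2l; apply: le_trans (m_max _ _); last first.
  by exists thetastar; last rewrite -sum_Plin_mul.
by apply: ler_sum => s' _; apply: ler_wpM2l.
Qed.

Lemma Vpi_le_Vhat h : (1 <= h <= H)%N ->
  (forall s a, Qpi H Pstar r pi h s a <= Qhat h s a) ->
  forall s, Vpi H Pstar r pi h s <= Vhat h s.
Proof.
move=> hH Q_le s; apply: le_trans (Q_le s (pi h s)) _.
by have [_ V_max] := Vhat_def h s hH; apply: V_max; exists (pi h s).
Qed.

Lemma optimism h : (1 <= h <= H.+1)%N -> forall s a,
  Qpi H Pstar r pi h s a <= Qhat h s a /\ Vpi H Pstar r pi h s <= Vhat h s.
Proof.
move: h; apply: nat_down_ind => [s a | h hH IH s a].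
  by rewrite /Vpi !Qpi_last Qhat_last Vhat_last.
have hH' : (1 <= h <= H)%N by lia.
have Q_le := Qpi_le_Qhat h hH' (fun s => (IH s a).2).
by split; [apply: Q_le | apply: Vpi_le_Vhat].
Qed.

End Optimism.

Arguments optimism {R S A d H phi thetastar r pi} Theta.

Theorem lemmaC2 (R : realFieldType) (S A : finType) (d H : nat)
  (phi : S -> A -> S -> 'I_d -> R) (thetastar : 'I_d -> R)
  (r : S -> A -> R)
  (r_range : forall s a, 0 <= r s a <= 1)
  (P_nonneg : forall s a s', 0 <= Plin thetastar phi s a s')
  (P_sum1 : forall s a, \sum_(s' : S) Plin thetastar phi s a s' = 1)
  (pistar : policy S A)
  (pistar_opt : optimal_policy H (Plin thetastar phi) r pistar)
  (B C : nat -> ('I_d -> R) -> Prop)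
  (Qhat : nat -> nat -> S -> A -> R) (Vhat : nat -> nat -> S -> R)
  (Qhat_last : forall k s a, Qhat k H.+1 s a = 0)
  (Vhat_last : forall k s, Vhat k H.+1 s = 0)
  (Qhat_def : forall k h s a, (1 <= k)%N -> (1 <= h <= H)%N ->
     exists m, is_max (fun x => exists2 theta, B k theta /\ C k theta &
                  x = \sum_(j < d) theta j *
                        \sum_(s' : S) phi s a s' j * Vhat k h.+1 s') m
               /\ Qhat k h s a = r s a + m)
  (Vhat_def : forall k h s, (1 <= k)%N -> (1 <= h <= H)%N ->
     is_max (fun x => exists a, x = Qhat k h s a) (Vhat k h s))
  (E0 : forall k, (1 <= k)%N -> B k thetastar /\ C k thetastar) :
  forall k h, (1 <= k)%N -> (1 <= h <= H.+1)%N ->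
    forall (s : S) (a : A),
      Qpi H (Plin thetastar phi) r pistar h s a <= Qhat k h s a /\
      Vpi H (Plin thetastar phi) r pistar h s <= Vhat k h s.
Proof.
move=> k h k_gt0.
apply: (optimism (fun theta => B k theta /\ C k theta)) => //.
- exact: E0.
- by move=> h' s a; apply: Qhat_def.
- by move=> h' s; apply: Vhat_def.
Qed.
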